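(* Assume $\int_{(0,1)}\upsilon^p\lambda(d\upsilon)<\infty$ for some $p\in(1,2)$ and $\int_{[1,\infty)}\upsilon\,\lambda(d\upsilon)<\infty$. Then for every $q\ge1$ there is a constant $\mathbf c_q$ with $\lim_{q\to\infty}\mathbf c_q=0$ such that for every $m\ge1$ and every $h\in(0,1)$, $$\int_{(0,q)^m}\mathbf 1_{\{\prod_{j=1}^m u_j\ge h\,q^m\}}\prod_{i=1}^m u_i\,\lambda(du_i)\le\frac{1}{p-1}\,\frac{(\mathbf c_q)^m h^{1-p}}{(m-1)!}\big[\log(2^m/h)\big]^{m-1}.$$ In particular, for every $\varepsilon\in(0,1)$, $$\int_{(0,q)^m}\mathbf 1_{\{\prod_{j=1}^m u_j\ge h\,q^m\}}\prod_{i=1}^m u_i\,\lambda(du_i)\le\frac{(2^{\varepsilon}\mathbf c_q/\varepsilon)^m}{p-1}\,h^{1-p-\varepsilon}.$$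
   Context: $\lambda$ is a positive measure on $(0,\infty)$ with $\lambda([a,\infty))<\infty$ for every $a>0$. *)

From HB Require Import structures.
From mathcomp Require Import all_boot all_order all_algebra.
From mathcomp Require Import all_classical all_reals all_analysis.
Set Implicit Arguments. Unset Strict Implicit. Unset Printing Implicit Defensive.
Import Order.TTheory GRing.Theory Num.Theory.
Local Open Scope classical_set_scope.
Local Open Scope ring_scope.
Local Open Scope ereal_scope.

(* For nonnegative measurable f this is the integral w.r.t. the m-fold
   product measure (Tonelli). *)
Fixpoint iint (R : realType) (mu : {measure set R -> \bar R}) (D : set R)
  (m : nat) (f : seq R -> \bar R) {struct m} : \bar R :=
  match m with
  | 0%N => f [::]
  | m'.+1 => \int[mu]_(x in D) iint mu D m' (fun s => f (x :: s))
  end.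

From HB Require Import structures.
From mathcomp Require Import all_boot all_order all_algebra.
From mathcomp Require Import all_classical all_reals all_analysis.
From mathcomp Require Import measurable_realfun.
From mathcomp Require Import ring.
Import Order.TTheory GRing.Theory Num.Theory.
Local Open Scope classical_set_scope.
Local Open Scope ring_scope.

(* Write P = u_1 ... u_m and phi_q(u) = u^p q^(1-p).  On the event
   P >= h q^m one has P <= (h q^m)^(1-p) P^p (a Markov-type bound, valid
   since p > 1), and the right-hand side factorises:
      (h q^m)^(1-p) P^p = h^(1-p) * prod_i phi_q(u_i).
   Integrating over (0,q)^m therefore bounds the truncated moment I by
   h^(1-p) F(q)^m, where F(q) = int_(0,q) phi_q d lambda.

   F(q) is finite and tends to 0 as q -> +oo: phi_q(u) 1_(0,q)(u) tends
   to 0 pointwise and is dominated, uniformly in q >= 1, by the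
   integrable function u^p 1_(0,1)(u) + u 1_[1,oo)(u) (dominated
   convergence).  With c_q := 2 F(q) both inequalities of the theorem are
   then elementary weakenings of I <= h^(1-p) F(q)^m: the first because
   (p-1)^-1 2^m [log(2^m/h)]^(m-1) / (m-1)! >= 1, the second because
   h^(1-p) <= h^(1-p-eps) and 1 <= 2^(1+eps)/eps. *)

Lemma integral_indic_EFin (R : realType) (mu : {measure set R -> \bar R})
    (D : set R) (f : R -> R) :
  (\int[mu]_x (f x * \1_D x)%:E = \int[mu]_(x in D) (f x)%:E)%E.
Proof.
rewrite [RHS]integral_mkcond; apply: eq_integral => x _.
by rewrite /patch indicE; case: ifP => _; rewrite ?mulr1 ?mulr0.
Qed.

Section IteratedIntegral.
Context {R : realType} {mu : {measure set R -> \bar R}} {D : set R}.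
Local Open Scope ereal_scope.

(* Monotonicity of the integral of nonnegative functions needs no
   measurability: the integral is a supremum over simple minorants.
   This matters because iint is never shown to be measurable in its
   outer variables. *)
Lemma ge0_le_integral_nomeas (f g : R -> \bar R) :
  (forall x, D x -> 0 <= f x) -> (forall x, D x -> f x <= g x) ->
  \int[mu]_(x in D) f x <= \int[mu]_(x in D) g x.
Proof.
move=> f0 fg.
have g0 x : D x -> 0 <= g x by move=> Dx; exact: le_trans (f0 _ Dx) (fg _ Dx).
rewrite (ge0_integralE _ f0) (ge0_integralE _ g0).
apply: ereal_sup_le => _ [s /= sf <-]; exists s => //= x.
apply: (le_trans (sf x)); rewrite /patch; case: ifP => // /set_mem Dx.
exact: fg.
Qed.

Definition in_power (m : nat) (s : seq R) := size s = m /\ {subset s <= D}.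

Lemma in_power_cons {m : nat} {x : R} {s : seq R} :
  D x -> in_power m s -> in_power m.+1 (x :: s).
Proof.
move=> Dx [sm sD]; split; first by rewrite /= sm.
by move=> u; rewrite in_cons => /orP[/eqP ->|/sD //]; exact: mem_set.
Qed.

Lemma iint_ge0 (m : nat) (f : seq R -> \bar R) :
  (forall s, in_power m s -> 0 <= f s) -> 0 <= iint mu D m f.
Proof.
elim: m f => [|m IH] f f0 /=; first by apply: f0.
apply: integral_ge0 => x Dx; apply: IH => s ms; apply: f0.
exact: in_power_cons.
Qed.

Lemma iint_le (m : nat) (f g : seq R -> \bar R) :
  (forall s, in_power m s -> 0 <= f s <= g s) ->
  iint mu D m f <= iint mu D m g.
Proof.
elim: m f g => [|m IH] f g fg /=.
  by have /andP[] // : 0 <= f [::] <= g [::] by apply: fg.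
apply: ge0_le_integral_nomeas => x Dx.
  by apply: iint_ge0 => s ms; case/andP: (fg _ (in_power_cons Dx ms)).
by apply: IH => s ms; exact: fg (in_power_cons Dx ms).
Qed.

Lemma iint_prod (phi : R -> R) (c : R) : measurable D ->
  measurable_fun D phi -> (forall x, D x -> (0 <= phi x)%R) ->
  \int[mu]_(x in D) (phi x)%:E = c%:E ->
  forall (m : nat) (C : R), (0 <= C)%R ->
  iint mu D m (fun s => (C * \prod_(u <- s) phi u)%:E) = (C * c ^+ m)%:E.
Proof.
move=> mD mphi phi0 Hc; have c0 : (0 <= c)%R.
  by rewrite -lee_fin -Hc integral_ge0 // => x Dx; rewrite lee_fin phi0.
elim=> [|m IH] C C0 /=; first by rewrite big_nil expr0.
transitivity (\int[mu]_(x in D) ((C * c ^+ m)%:E * (phi x)%:E)).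
  apply: eq_integral => x /set_mem Dx.
  under eq_fun do rewrite big_cons mulrA.
  by rewrite IH ?mulr_ge0 ?phi0 // -EFinM mulrAC.
rewrite ge0_integralZl_EFin ?mulr_ge0 ?exprn_ge0 //; last exact/measurable_EFinP.
by rewrite Hc -EFinM -mulrA -exprSr.
Qed.

End IteratedIntegral.

Section MarkovBound.
Context {R : realType} (p : R).
Hypothesis p_gt1 : 1 < p.

Lemma prod_powR_mul (r : R) (s : seq R) : {subset s <= [pred u | 0 <= u]} ->
  \prod_(u <- s) (u `^ p * r) = (\prod_(u <- s) u) `^ p * r ^+ size s.
Proof.
elim: s => [|x s IH] s0; first by rewrite !big_nil powR1 mulr1.
have s0' : {subset s <= [pred u | 0 <= u]}.
  by move=> u us; apply: s0; rewrite in_cons us orbT.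
have x0 : 0 <= x by apply: s0; rewrite in_cons eqxx.
have P0 : 0 <= \prod_(u <- s) u by rewrite big_seq prodr_ge0 // => u /s0'.
by rewrite !big_cons IH // (powRM p x0 P0) exprS mulrACA.
Qed.

Lemma le_powR_level (a P : R) : 0 < a -> a <= P -> P <= a `^ (1 - p) * P `^ p.
Proof.
move=> a0 aP; have P0 : 0 <= P by rewrite ltW // (lt_le_trans a0 aP).
rewrite -(mulr_powRB1 P0 (lt_trans ltr01 p_gt1)) -[1 - p]opprB powRN.
rewrite mulrCA -[X in X <= _]mulr1 ler_wpM2l // ler_pdivlMl ?powR_gt0 // mulr1.
by apply: ge0_ler_powR; rewrite ?nnegrE ?subr_ge0 // ltW.
Qed.

Definition tilt (q u : R) := u `^ p * q `^ (1 - p).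

(* phi_q(u) <= u^p as q^(1-p) <= 1, and phi_q(u) = u (u/q)^(p-1) <= u
   on (0,q]: the two regimes of the integrable envelope below. *)
Lemma tilt_le_powR (q u : R) : 1 <= q -> tilt q u <= u `^ p.
Proof.
move=> q1; rewrite /tilt -[leRHS]mulr1 ler_wpM2l ?powR_ge0 //.
by rewrite -[leRHS](powRr0 q) ler_powR // subr_le0 ltW.
Qed.

Lemma tilt_le_id (q u : R) : 0 < u <= q -> tilt q u <= u.
Proof.
case/andP=> u0 uq; have q0 : 0 < q by exact: lt_le_trans uq.
rewrite /tilt -(mulr_powRB1 (ltW u0) (lt_trans ltr01 p_gt1)) -[1 - p]opprB.
rewrite powRN -mulrA -[leRHS]mulr1 ler_pM2l // ler_pdivrMr ?powR_gt0 // mul1r.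
by apply: ge0_ler_powR => //; rewrite ?nnegrE ?subr_ge0 ltW.
Qed.

Lemma truncated_prod_le (q h : R) (s : seq R) :
  1 <= q -> 0 < h -> {subset s <= [pred u | 0 < u]} ->
  0 <= (if h * q ^+ size s <= \prod_(u <- s) u then \prod_(u <- s) u else 0)
    <= h `^ (1 - p) * \prod_(u <- s) tilt q u.
Proof.
move=> q1 h0 s0.
have P0 : 0 < \prod_(u <- s) u by rewrite big_seq prodr_gt0 // => u /s0.
have Q0 : 0 < q ^+ size s by rewrite exprn_gt0 // (lt_le_trans ltr01 q1).
rewrite prod_powR_mul; last by move=> u /s0 /ltW.
have -> : q `^ (1 - p) ^+ size s = (q ^+ size s) `^ (1 - p).
  rewrite -powR_mulrn ?powR_ge0 // -powRrM [X in q `^ X]mulrC powRrM.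
  by rewrite powR_mulrn // (le_trans ler01).
case: ifP => hP; last by rewrite lexx mulr_ge0 ?powR_ge0 ?mulr_ge0 ?powR_ge0.
rewrite ltW //= mulrCA -(powRM _ (ltW h0) (ltW Q0)) mulrC.
by apply: le_powR_level; rewrite ?mulr_gt0.
Qed.

End MarkovBound.

Lemma truncated_moment_le (R : realType) (lam : {measure set R -> \bar R})
    (p q h F : R) (m : nat) : 1 < p -> 1 <= q -> 0 < h ->
  (\int[lam]_(u in `]0%R, q[%classic) (tilt p q u)%:E = F%:E)%E ->
  (iint lam `]0%R, q[%classic m
     (fun s => (if h * q ^+ m <= \prod_(u <- s) u
                then \prod_(u <- s) u else 0)%:E)
   <= (h `^ (1 - p) * F ^+ m)%:E)%E.
Proof.
move=> p1 q1 h0 HF.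
have tilt0 x : 0 <= tilt p q x by rewrite mulr_ge0 ?powR_ge0.
rewrite -(iint_prod _ _ (measurable_itv _) _ _ HF) ?powR_ge0 //; last first.
  by apply: measurable_funM; [exact: measurable_funS (measurable_powR p)|].
apply: iint_le => s [<- sD]; rewrite !lee_fin.
apply: truncated_prod_le => // u /sD /set_mem /=.
by rewrite in_itv /= => /andP[].
Qed.

Lemma powR_Ny_cvg0 (R : realType) (r : R) (u : R^nat) : 0 < r ->
  (forall n, 0 < u n) -> u n @[n --> \oo] --> +oo ->
  u n `^ (- r) @[n --> \oo] --> 0.
Proof.
move=> r0 u0 uoo; under eq_fun do rewrite powRN.
apply/(gtr0_cvgV0 (f := fun n => u n `^ r)).
  by apply: nearW => n; exact: powR_gt0.
apply/cvgryPge => A; move/cvgryPge: uoo => /(_ (Num.max A 1 `^ r^-1)).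
apply: filterS => n HB; apply: (le_trans _ (ge0_ler_powR (ltW r0) _ _ HB)).
- by rewrite -powRrM mulVf ?gt_eqF // powRr1 ?le_max ?lexx // ler01 orbT.
- by rewrite nnegrE powR_ge0.
- by rewrite nnegrE ltW.
Qed.

Section Decay.
Context {R : realType} (lam : {measure set R -> \bar R}) (p : R).
Hypothesis p_gt1 : 1 < p.
Hypothesis moment_small : (\int[lam]_(u in `]0%R, 1%R[%classic) ((u `^ p)%:E) < +oo)%E.
Hypothesis moment_large : (\int[lam]_(u in `[1%R, +oo[%classic) (u%:E) < +oo)%E.

Definition tilt_trunc (q u : R) := tilt p q u * \1_(`]0%R, q[%classic) u.
Definition envelope (u : R) := u `^ p * \1_(`]0%R, 1%R[%classic) u
                               + u * \1_(`[1%R, +oo[%classic) u.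

Lemma measurable_tilt_trunc (q : R) : measurable_fun setT (tilt_trunc q).
Proof.
apply: measurable_funM; last by apply: measurable_indic; exact: measurable_itv.
by apply: measurable_funM; [exact: measurable_funS (measurable_powR p)|].
Qed.

Lemma measurable_envelope : measurable_fun setT envelope.
Proof.
apply: measurable_funD; apply: measurable_funM => //;
  by [exact: measurable_funS (measurable_powR p) | apply: measurable_indic].
Qed.

Lemma tilt_trunc_ge0 (q u : R) : 0 <= tilt_trunc q u.
Proof. by rewrite !mulr_ge0 ?powR_ge0 ?indicE ?ler0n. Qed.

Lemma envelope_ge0 (u : R) : 0 <= envelope u.
Proof.
rewrite /envelope !indicE.
case: (boolP (u \in `[1%R, +oo[%classic)) => [/set_mem|_].
  rewrite /= in_itv /= andbT => u1.
  by rewrite mulr1 addr_ge0 ?mulr_ge0 ?powR_ge0 ?ler0n // (le_trans ler01).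
by rewrite mulr0 addr0 mulr_ge0 ?powR_ge0 ?ler0n.
Qed.

Lemma tilt_trunc_le_envelope (q u : R) : 1 <= q -> tilt_trunc q u <= envelope u.
Proof.
move=> q1; rewrite /tilt_trunc indicE.
case: (boolP (u \in `]0%R, q[%classic)) => [/set_mem|] uq; last first.
  by rewrite mulr0 envelope_ge0.
move: uq; rewrite /= in_itv /= => /andP[u0 uq]; rewrite mulr1 /envelope !indicE.
have [u1|u1] := ltP u 1.
  have -> : u \in `]0%R, 1%R[%classic by apply/mem_set; rewrite /= in_itv /= u0.
  have -> : (u \in `[1%R, +oo[%classic) = false.
    by apply/negbTE/negP => /set_mem; rewrite /= in_itv /= andbT leNgt u1.
  by rewrite mulr1 mulr0 addr0 tilt_le_powR.
have -> : (u \in `]0%R, 1%R[%classic) = false.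
  by apply/negbTE/negP => /set_mem; rewrite /= in_itv /= => /andP[_]; rewrite ltNge u1.
have -> : u \in `[1%R, +oo[%classic by apply/mem_set; rewrite /= in_itv /= u1.
by rewrite mulr0 mulr1 add0r tilt_le_id // u0 ltW.
Qed.

Lemma envelope_integrable : lam.-integrable setT (fun u => (envelope u)%:E).
Proof.
apply/integrableP; split; first by apply/measurable_EFinP; exact: measurable_envelope.
under eq_integral do rewrite gee0_abs ?lee_fin ?envelope_ge0 // EFinD.
rewrite ge0_integralD //.
- by rewrite !integral_indic_EFin lte_add_pinfty.
- by move=> u _; rewrite lee_fin mulr_ge0 ?powR_ge0 // indicE ler0n.
- apply/measurable_EFinP; apply: measurable_funM; last exact: measurable_indic.
  exact: measurable_funS (measurable_powR p).
- move=> u _; rewrite lee_fin indicE; case: (boolP (u \in _)) => [/set_mem|] u1.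
    by rewrite mulr1; move: u1; rewrite /= in_itv /= andbT; exact: le_trans.
  by rewrite mulr0.
- by apply/measurable_EFinP; apply: measurable_funM => //; exact: measurable_indic.
Qed.

Definition Fq (q : R) := fine (\int[lam]_(u in `]0%R, q[%classic) (tilt p q u)%:E)%E.

Lemma integral_tilt_Fq (q : R) : 1 <= q ->
  (\int[lam]_(u in `]0%R, q[%classic) (tilt p q u)%:E = (Fq q)%:E)%E.
Proof.
move=> q1; rewrite /Fq fineK // ge0_fin_numE; last first.
  by apply: integral_ge0 => u _; rewrite lee_fin mulr_ge0 ?powR_ge0.
rewrite -integral_indic_EFin.
apply: le_lt_trans (integrableP _ _ _ envelope_integrable).2.
apply: ge0_le_integral => //.
- by move=> u _; rewrite lee_fin tilt_trunc_ge0.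
- by apply/measurable_EFinP; exact: measurable_tilt_trunc.
- by apply: measurableT_comp => //; apply/measurable_EFinP; exact: measurable_envelope.
- by move=> u _; rewrite gee0_abs ?lee_fin ?envelope_ge0 // tilt_trunc_le_envelope.
Qed.

Lemma integral_tilt_trunc_cvg0 (u : R^nat) : (forall n, 1 <= u n) ->
  u n @[n --> \oo] --> +oo ->
  (\int[lam]_x (tilt_trunc (u n) x)%:E)%E @[n --> \oo] --> 0%E.
Proof.
move=> u1 uoo.
have pointwise x : (tilt_trunc (u n) x)%:E @[n --> \oo] --> (cst 0%E x).
  apply: cvg_EFin; first exact: nearW.
  have decay : x `^ p * u n `^ (1 - p) @[n --> \oo] --> 0.
    rewrite -[0](mulr0 (x `^ p)) -opprB; apply: cvgMl_tmp; apply: powR_Ny_cvg0 => //.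
    - by rewrite subr_gt0.
    - by move=> n; exact: lt_le_trans ltr01 (u1 n).
  apply: (squeeze_cvgr (g := fun n => tilt_trunc (u n) x) _ (cvg_cst 0) decay).
  apply: nearW => n /=.
  rewrite tilt_trunc_ge0 /tilt_trunc indicE.
  by case: (_ \in _); rewrite ?mulr1 ?mulr0 ?lexx ?mulr_ge0 ?powR_ge0.
have dominated x n : (`|(tilt_trunc (u n) x)%:E| <= (envelope x)%:E)%E.
  by rewrite gee0_abs ?lee_fin ?tilt_trunc_ge0 // tilt_trunc_le_envelope.
have mtrunc n : measurable_fun setT (fun x => (tilt_trunc (u n) x)%:E).
  by apply/measurable_EFinP; exact: measurable_tilt_trunc.
have [_ _] := @dominated_convergence _ _ _ lam setT measurableT _ _ _ mtrunc
  (measurable_cst _) (aeW lam (fun x _ => pointwise x)) envelope_integrable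
  (aeW lam (fun x n _ => dominated x n)).
by rewrite integral0.
Qed.

Lemma Fq_cvg0 : Fq q @[q --> +oo] --> 0.
Proof.
apply/cvg_pinftyP => u uoo; pose v n := Num.max (u n) 1.
have v1 n : 1 <= v n by rewrite le_max lexx orbT.
have voo : v n @[n --> \oo] --> +oo.
  apply/cvgryPge => A; move/cvgryPge: uoo => /(_ A); apply: filterS => n Au.
  by rewrite (le_trans Au) // le_max lexx.
have uv : \forall n \near \oo, fine (\int[lam]_x (tilt_trunc (v n) x)%:E)%E = Fq (u n).
  move/cvgryPge: uoo => /(_ 1); apply: filterS => n u1.
  by rewrite /v max_l // integral_indic_EFin.
apply: cvg_trans (near_eq_cvg uv) _.
exact: fine_cvg (integral_tilt_trunc_cvg0 v v1 voo).
Qed.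

End Decay.

Lemma fact_le_pow (k : nat) : (k`! <= k.+1 ^ k)%N.
Proof.
elim: k => [//|k IH]; rewrite factS expnS leq_mul //.
by apply: leq_trans IH _; case: k => // k; rewrite leq_exp2r.
Qed.

Section Numerics.
Context {R : realType}.

(* From log(1 + x) <= x at x = -1/2. *)
Lemma ln2_ge_half : 2^-1 <= ln (2 : R).
Proof.
have halfN : -1 < - 2^-1 :> R by rewrite ltrN2 invf_lt1 // ltr1n.
have := le_ln1Dx halfN; have -> : 1 + - 2^-1 = 2^-1 :> R by field.
by rewrite lnV ?posrE // lerN2.
Qed.

Lemma inv_subr1_ge1 (p : R) : 1 < p < 2 -> 1 <= (p - 1)^-1.
Proof. by case/andP=> p1 p2; rewrite invf_ge1 ?subr_gt0 // lerBlDr ltW. Qed.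

(* k <= 2 log(2^k / h) for 0 < h <= 1, since log 2 >= 1/2. *)
Lemma nat_le_2log (k : nat) (h : R) : 0 < h <= 1 -> k%:R <= 2 * ln (2 ^+ k / h).
Proof.
case/andP=> h0 h1; apply: (@le_trans _ _ (2 * ln (2 ^+ k))).
  rewrite lnXn // -[ln 2 *+ k]mulr_natr mulrA -[leLHS]mul1r ler_wpM2r //.
  by rewrite -ler_pdivrMl // mulr1 ln2_ge_half.
rewrite ler_wpM2l // ler_ln ?posrE ?divr_gt0 ?exprn_gt0 //.
by rewrite ler_peMr ?exprn_ge0 // invf_ge1.
Qed.

(* The combinatorial factor of the first bound is at least 1:
   (m-1)! <= m^(m-1) <= (2 log(2^m/h))^(m-1) <= 2^m log(2^m/h)^(m-1). *)
Lemma log_factor_ge1 (p h : R) (m : nat) : (1 <= m)%N -> 0 < h < 1 -> 1 < p < 2 ->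
  1 <= (p - 1)^-1 * (2 ^+ m / ((m - 1)`!)%:R * ln (2 ^+ m / h) ^+ (m - 1)).
Proof.
move=> m1 /andP[h0 h1] /inv_subr1_ge1 p_inv; apply: mulr_ege1 => //.
case: m m1 => // k _; rewrite subSS subn0.
rewrite mulrAC ler_pdivlMr ?ltr0n ?fact_gt0 // mul1r.
have L : k.+1%:R <= 2 * ln (2 ^+ k.+1 / h) by apply: nat_le_2log; rewrite h0 ltW.
apply: (@le_trans _ _ ((k.+1 ^ k)%:R)); first by rewrite ler_nat fact_le_pow.
move: L; set l := ln _ => L; rewrite natrX exprS -mulrA -exprMn -[leLHS]mul1r.
by apply: ler_pM => //; [rewrite ler1n | apply: lerXn2r; rewrite ?nnegrE // (le_trans _ L)].
Qed.

Lemma first_bound_weaken (p h c : R) (m : nat) : (1 <= m)%N -> 0 < h < 1 ->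
    1 < p < 2 -> 0 <= c ->
  h `^ (1 - p) * c ^+ m <= (p - 1)^-1 * ((2 * c) ^+ m * h `^ (1 - p))
    / ((m - 1)`!)%:R * ln (2 ^+ m / h) ^+ (m - 1).
Proof.
move=> m1 h01 p12 c0.
have -> : (p - 1)^-1 * ((2 * c) ^+ m * h `^ (1 - p)) / ((m - 1)`!)%:R
    * ln (2 ^+ m / h) ^+ (m - 1) = (h `^ (1 - p) * c ^+ m) *
  ((p - 1)^-1 * (2 ^+ m / ((m - 1)`!)%:R * ln (2 ^+ m / h) ^+ (m - 1))).
  by rewrite exprMn; ring.
by rewrite ler_peMr ?mulr_ge0 ?powR_ge0 ?exprn_ge0 // log_factor_ge1.
Qed.

(* Lowering the exponent of h in (0,1) only increases h^r. *)
Lemma powR_le_shift (p h eps : R) : 0 < h < 1 -> 1 < p < 2 -> 0 < eps ->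
  h `^ (1 - p) <= (p - 1)^-1 * h `^ (1 - p - eps).
Proof.
move=> /andP[h0 h1] p12 e0.
have shift : h `^ (1 - p) <= h `^ (1 - p - eps).
  rewrite [leRHS]powRD; last by rewrite (gt_eqF h0) implybT.
  rewrite ler_peMr ?powR_ge0 // powRN invf_ge1 ?powR_gt0 //.
  by have := ge0_ler_powR (ltW e0) _ _ (ltW h1); rewrite powR1; apply; rewrite nnegrE ?ltW.
apply: (le_trans shift).
by rewrite ler_peMl ?powR_ge0 ?inv_subr1_ge1.
Qed.

(* Second bound of the theorem, from I <= h^(1-p) c^m (with c_q = 2c),
   using 1 <= 2^(1+eps)/eps. *)
Lemma second_bound_weaken (p h c eps : R) (m : nat) : 0 < h < 1 -> 1 < p < 2 ->
    0 <= c -> 0 < eps < 1 ->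
  h `^ (1 - p) * c ^+ m <= (2 `^ eps * (2 * c) / eps) ^+ m / (p - 1)
    * h `^ (1 - p - eps).
Proof.
move=> h01 p12 c0 /andP[e0 e1].
have a1 : 1 <= 2 `^ eps * 2 / eps.
  rewrite -mulrA; apply: mulr_ege1.
    by rewrite -[leLHS](powRr0 2) ler_powR ?ler1n ?ltW.
  by rewrite ler_pdivlMr // mul1r (le_trans (ltW e1)) // ler1n.
have -> : 2 `^ eps * (2 * c) / eps = (2 `^ eps * 2 / eps) * c by ring.
rewrite [leLHS]mulrC -mulrA; apply: ler_pM; rewrite ?exprn_ge0 ?powR_ge0 //.
- have a0 := le_trans ler01 a1.
  by apply: lerXn2r; rewrite ?nnegrE ?(mulr_ge0 a0 c0) ?ler_peMl.
- exact: powR_le_shift.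
Qed.

End Numerics.

Theorem lemma4p7 (R : realType) (lam : {measure set R -> \bar R}) (p : R) :
  (* lambda is a measure on (0, oo) *)
  lam `]-oo, 0]%classic = 0%E ->
  (forall a : R, 0 < a -> (lam `[a, +oo[%classic < +oo)%E) ->
  1 < p < 2 ->
  (\int[lam]_(u in `]0%R, 1%R[%classic) ((u `^ p)%:E) < +oo)%E ->
  (\int[lam]_(u in `[1%R, +oo[%classic) (u%:E) < +oo)%E ->
  exists c : R -> R,
    c q @[q --> +oo] --> 0 /\
    forall q : R, 1 <= q ->
    forall m : nat, (1 <= m)%N ->
    forall h : R, 0 < h < 1 ->
      let I := iint lam `]0, q[%classic m
        (fun s => (if h * q ^+ m <= \prod_(u <- s) u
                   then \prod_(u <- s) u else 0)%:E) in
      (I <= ((p - 1)^-1 * (c q ^+ m * h `^ (1 - p)) / ((m - 1)`!)%:R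
               * (ln (2 ^+ m / h)) ^+ (m - 1))%:E)%E /\
      (forall eps : R, 0 < eps < 1 ->
        (I <= ((2 `^ eps * c q / eps) ^+ m / (p - 1) * h `^ (1 - p - eps))%:E)%E).
Proof.
move=> _ _ p12 small large; have /andP[p1 _] := p12.
exists (fun q => 2 * Fq lam p q); split.
  by rewrite -(mulr0 2); apply: cvgMl_tmp; exact: Fq_cvg0.
move=> q q1 m m1 h h01 I; have /andP[h0 _] := h01.
have F0 : 0 <= Fq lam p q.
  by rewrite /Fq fine_ge0 // integral_ge0 // => u _; rewrite lee_fin mulr_ge0 ?powR_ge0.
have HI : (I <= (h `^ (1 - p) * Fq lam p q ^+ m)%:E)%E.
  by apply: truncated_moment_le => //; exact: integral_tilt_Fq.
split => [|eps eps01]; apply: (le_trans HI); rewrite lee_fin.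
- exact: first_bound_weaken.
- exact: second_bound_weaken.
Qed.
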